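(* Let $(\Omega,\mathcal R,\mathcal K)$ be a bidirectional kinetic system with matrix of reactions having columns $R_1,\dots,R_{|\mathcal R|/2}$ and cycle space $\mathcal C$, and let $\mathcal R_a\subset\mathcal R$. Suppose there is a cycle $c\in\mathcal C$ with $\sum_{j=1}^{|\mathcal R|/2}\log\!\left(\frac{K_{-R_j}}{K_{R_j}}\right)c(j)\neq0$ and such that every $R_j$ with $c(j)\neq0$ (and its reverse) belongs to $\mathcal R_a$. Then $(\Omega,\mathcal R,\mathcal K)$ does not admit an $\mathcal R_a$-admissible closed completion.
   Context: A chemical network is $(\Omega,\mathcal R)$ with $\Omega=\{1,\dots,N\}$ and $\mathcal R$ a finite set of nonzero integer vectors indexed by $\Omega$. $I(R)=\{i:R(i)<0\}$, $F(R)=\{i:R(i)>0\}$. Bidirectional: $R\in\mathcal R\Rightarrow-R\in\mathcal R$; $\mathcal R_s$ contains exactly one of each pair $\{R,-R\}$; the matrix of reactions $\mathbf R$ has the elements $R_1,\dots,R_{|\mathcal R_s|}$ of $\mathcal R_s$ as columns; cycle space $\mathcal C=\ker\mathbf R$. Conservation laws $\mathcal M=(\mathrm{span}\,\mathcal R)^\perp$; conservative: $\mathcal M\cap(0,\infty)^\Omega\ne\emptyset$. Kinetic system: rates $\mathcal K:\mathcal R\to(0,\infty)$, $K_R=\mathcal K(R)$; detailed balance: there is $\bar N\in(0,\infty)^\Omega$ with $K_R\prod_{i\in I(R)}\bar N_i^{-R(i)}=K_{-R}\prod_{i\in F(R)}\bar N_i^{R(i)}$ for all $R\in\mathcal R_s$.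 Closed: detailed balance, conservative, and $I(R),F(R)\neq\emptyset$ for all reactions. $\pi_Av=(v(i))_{i\in A}$. For $(\Omega_c,\mathcal R_c,\mathcal K_c)$ with $\Omega\subset\Omega_c$ and positive $n=(n_i)_{i\in\Omega_c\setminus\Omega}$, reduced rates $\mathcal K_c[n](R)=\sum_{\bar R\in\mathcal R_c:\pi_\Omega\bar R=R}\mathcal K_c(\bar R)\prod_{s\in(\Omega_c\setminus\Omega)\cap I(\bar R)}n_s^{-\bar R(s)}$. A completion of $(\Omega,\mathcal R,\mathcal K)$ is a kinetic system $(\Omega_c,\mathcal R_c,\mathcal K_c)$ with $\Omega\subset\Omega_c$, $\mathcal R=\{\pi_\Omega R:R\in\mathcal R_c\}$, and $\mathcal K=\mathcal K_c[n]$ for some such $n$. It is $\mathcal R_a$-admissible if $\pi_{\Omega_c\setminus\Omega}R=0$ for every $R\in\mathcal R_c$ with $\pi_\Omega R\in\mathcal R_a$ (the reactions in $\mathcal R_a$ are the constrained reactions). *)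

From HB Require Import structures.
From mathcomp Require Import all_boot all_order all_algebra.
From mathcomp Require Import finmap.
From mathcomp Require Import reals exp.
Set Implicit Arguments. Unset Strict Implicit. Unset Printing Implicit Defensive.
Import Order.TTheory GRing.Theory Num.Theory.
Local Open Scope ring_scope.
Local Open Scope fset_scope.

Definition vec (S : finType) := {ffun S -> int}.

Definition vneg (S : finType) (R : vec S) : vec S := [ffun i => - R i].

Definition Iset (S : finType) (R : vec S) : {set S} := [set i | R i < 0].
Definition Fset (S : finType) (R : vec S) : {set S} := [set i | 0 < R i].

Definition network (S : finType) (Rset : {fset vec S}) : Prop :=
  forall R, R \in Rset -> R <> [ffun => 0].

Definition bidirectional (S : finType) (Rset : {fset vec S}) : Prop :=
  forall R, R \in Rset -> vneg R \in Rset.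

Definition kinetic (R : realType) (S : finType) (Rset : {fset vec S})
  (K : vec S -> R) : Prop :=
  network Rset /\ forall Rc, Rc \in Rset -> 0 < K Rc.

(* Rs lists R_1,...,R_m: the elements of R_s, one of each pair {R,-R}. *)
Definition is_Rs (S : finType) (Rset : {fset vec S}) (Rs : seq (vec S)) : Prop :=
  uniq Rs /\ (forall R, R \in Rs -> R \in Rset) /\
  (forall R, R \in Rset -> (R \in Rs) != (vneg R \in Rs)).

(* c is in the cycle space ker (matrix with columns R_1..R_m). *)
Definition is_cycle (R : realType) (S : finType) (Rs : seq (vec S))
  (c : 'I_(size Rs) -> R) : Prop :=
  forall i : S, \sum_(j < size Rs) c j * ((nth [ffun => 0] Rs j) i)%:~R = 0.

Definition detailed_balance (R : realType) (S : finType) (Rset : {fset vec S})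
  (K : vec S -> R) : Prop :=
  bidirectional Rset /\
  exists Nb : S -> R, (forall i, 0 < Nb i) /\
    forall Rc, Rc \in Rset ->
      K Rc * \prod_(i in Iset Rc) Nb i ^+ absz (Rc i)
      = K (vneg Rc) * \prod_(i in Fset Rc) Nb i ^+ absz (Rc i).

Definition conservative (R : realType) (S : finType) (Rset : {fset vec S}) : Prop :=
  exists m : S -> R, (forall i, 0 < m i) /\
    forall Rc, Rc \in Rset -> \sum_i m i * (Rc i)%:~R = 0.

Definition closed_system (R : realType) (S : finType) (Rset : {fset vec S})
  (K : vec S -> R) : Prop :=
  detailed_balance Rset K /\ conservative R Rset /\
  forall Rc, Rc \in Rset -> Iset Rc != set0 /\ Fset Rc != set0.

(* Completion species Omega_c = Omega (+) T, with Omega embedded via inl. *)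
Definition projO (S T : finType) (Rb : vec (S + T)%type) : vec S :=
  [ffun i => Rb (inl i)].
Definition projT (S T : finType) (Rb : vec (S + T)%type) : vec T :=
  [ffun t => Rb (inr t)].

Definition reduced_rate (R : realType) (S T : finType)
  (Rc : {fset vec (S + T)%type}) (Kc : vec (S + T)%type -> R) (n : T -> R)
  (Rv : vec S) : R :=
  \sum_(Rb <- Rc | projO Rb == Rv)
     Kc Rb * \prod_(s : T | Rb (inr s) < 0) n s ^+ absz (Rb (inr s)).

Definition is_completion (R : realType) (S T : finType)
  (Rset : {fset vec S}) (K : vec S -> R)
  (Rc : {fset vec (S + T)%type}) (Kc : vec (S + T)%type -> R) : Prop :=
  kinetic Rc Kc /\
  (forall Rv, Rv \in Rset <-> exists2 Rb, Rb \in Rc & projO Rb = Rv) /\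
  exists n : T -> R, (forall s, 0 < n s) /\
    forall Rv, Rv \in Rset -> K Rv = reduced_rate Rc Kc n Rv.

Definition admissible (S T : finType) (Ra : {fset vec S})
  (Rc : {fset vec (S + T)%type}) : Prop :=
  forall Rb, Rb \in Rc -> projO Rb \in Ra -> projT Rb = [ffun => 0].

Definition admits_admissible_closed_completion (R : realType) (N : nat)
  (Rset : {fset vec 'I_N}) (K : vec 'I_N -> R) (Ra : {fset vec 'I_N}) : Prop :=
  exists (M : nat) (Rc : {fset vec ('I_N + 'I_M)%type})
         (Kc : vec ('I_N + 'I_M)%type -> R),
    is_completion Rset K Rc Kc /\ admissible Ra Rc /\ closed_system Rc Kc.

(** Admissibility forces every constrained reaction [R] to have a unique lift
    [R (+) 0] in the completion, so its reduced rate is the rate of that lift.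
    Detailed balance of the closed completion at [Nb] then gives
    [ln (K_{-R} / K_R) = - <R, ln Nb|_Omega>] for every constrained reaction:
    the log-ratios of the rates on the support of [c] come from a potential.
    Pairing with a cycle [c] therefore gives [- <R c, ln Nb|_Omega> = 0],
    contradicting the hypothesis on [c]. *)

From HB Require Import structures.
From mathcomp Require Import all_boot all_order all_algebra.
From mathcomp Require Import finmap.
From mathcomp Require Import reals sequences exp.
From mathcomp Require Import lra.
Set Implicit Arguments. Unset Strict Implicit. Unset Printing Implicit Defensive.
Import Order.TTheory GRing.Theory Num.Theory.
Local Open Scope ring_scope.
Local Open Scope fset_scope.

Section DetailedBalance.
Variables (R : realType) (S : finType).

Lemma prod_exp_expR (A : {set S}) (v : vec S) (x : S -> R) :
  (forall i, 0 < x i) ->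
  \prod_(i in A) x i ^+ absz (v i) = expR (\sum_(i in A) (absz (v i))%:R * ln (x i)).
Proof.
move=> x_gt0; rewrite expR_sum; apply: eq_bigr => i _.
by rewrite expRM_natl lnK // posrE.
Qed.

Lemma sum_Fset_sub_Iset (v : vec S) (y : S -> R) :
  \sum_(i in Fset v) (absz (v i))%:R * y i - \sum_(i in Iset v) (absz (v i))%:R * y i
  = \sum_i (v i)%:~R * y i.
Proof.
rewrite (big_mkcond (mem (Fset v))) (big_mkcond (mem (Iset v))) -sumrB /=.
apply: eq_bigr => i _; rewrite !inE natr_absz.
case: (ltrgtP (v i) 0) => [v_lt0|v_gt0|->].
- by rewrite ltr0_norm // sub0r intrN mulNr opprK.
- by rewrite gtr0_norm // subr0.
- by rewrite subrr mul0r.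
Qed.

Lemma ln_rate_ratio_balanced (v : vec S) (k1 k2 : R) (x : S -> R) :
  0 < k1 -> 0 < k2 -> (forall i, 0 < x i) ->
  k1 * \prod_(i in Iset v) x i ^+ absz (v i) = k2 * \prod_(i in Fset v) x i ^+ absz (v i) ->
  ln (k2 / k1) = - \sum_i (v i)%:~R * ln (x i).
Proof.
move=> k1_gt0 k2_gt0 x_gt0; rewrite !prod_exp_expR // ln_div ?posrE //.
move=> /(congr1 (@ln R)); rewrite !lnM ?posrE ?expR_gt0 // !expRK.
by rewrite -sum_Fset_sub_Iset; lra.
Qed.

End DetailedBalance.

Section AdmissibleCompletion.
Variables (R : realType) (S T : finType).

Definition inl_vec (v : vec S) : vec (S + T)%type :=
  [ffun x => if x is inl i then v i else 0].

Lemma projO_inl_vec (v : vec S) : projO (inl_vec v) = v.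
Proof. by apply/ffunP => i; rewrite !ffunE. Qed.

Lemma inl_vec_vneg (v : vec S) : inl_vec (vneg v) = vneg (inl_vec v).
Proof. by apply/ffunP; case=> [i|t]; rewrite !ffunE ?oppr0. Qed.

Lemma sum_inl_vec (v : vec S) (y : S + T -> R) :
  \sum_x ((inl_vec v) x)%:~R * y x = \sum_i (v i)%:~R * y (inl i).
Proof.
rewrite big_sumType /=.
rewrite [X in (_ + X)%R]big1 ?addr0 => [|t _]; last by rewrite ffunE mul0r.
by apply: eq_bigr => i _; rewrite ffunE.
Qed.

Variables (Rset Ra : {fset vec S}) (K : vec S -> R).
Variables (Rc : {fset vec (S + T)%type}) (Kc : vec (S + T)%type -> R).

Lemma reduced_rate_unique_lift (n : T -> R) (v : vec S) :
  inl_vec v \in Rc -> (forall Rb, Rb \in Rc -> projO Rb = v -> Rb = inl_vec v) ->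
  reduced_rate Rc Kc n v = Kc (inl_vec v).
Proof.
move=> lift_in lift_unique; rewrite /reduced_rate (big_rem (inl_vec v)) //=.
rewrite projO_inl_vec eqxx big1 => [|t]; last by rewrite ffunE ltxx.
rewrite mulr1 big1_seq ?addr0 // => Rb /andP[/eqP projRb Rb_in].
have Rb_inRc := mem_rem Rb_in.
move: Rb_in; rewrite (lift_unique _ Rb_inRc projRb).
by rewrite mem_rem_uniq ?fset_uniq // inE eqxx.
Qed.

Hypothesis completion : is_completion Rset K Rc Kc.
Hypothesis adm : admissible Ra Rc.
Hypothesis Ra_sub : Ra `<=` Rset.

Lemma admissible_lift_eq (Rb : vec (S + T)%type) :
  Rb \in Rc -> projO Rb \in Ra -> Rb = inl_vec (projO Rb).
Proof.
move=> Rb_in /(adm Rb_in) /ffunP projT0.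
by apply/ffunP; case=> [i|t]; rewrite !ffunE //; move: (projT0 t); rewrite !ffunE.
Qed.

Lemma admissible_completion_rate (v : vec S) :
  v \in Ra -> inl_vec v \in Rc /\ K v = Kc (inl_vec v).
Proof.
have [_ [lifts [n [_ Kred]]]] := completion.
move=> v_in; have v_inRset : v \in Rset := fsubsetP Ra_sub v v_in.
have lift_unique Rb : Rb \in Rc -> projO Rb = v -> Rb = inl_vec v.
  by move=> Rb_in projRb; rewrite -projRb; apply: admissible_lift_eq; rewrite ?projRb.
have [Rb Rb_in projRb] := (lifts v).1 v_inRset.
have lift_in : inl_vec v \in Rc by rewrite -(lift_unique Rb).
by rewrite Kred // reduced_rate_unique_lift.
Qed.

Lemma ln_rate_ratio_admissible (Nb : S + T -> R) (v : vec S) :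
  (forall x, 0 < Nb x) ->
  (forall Rb, Rb \in Rc -> Kc Rb * \prod_(x in Iset Rb) Nb x ^+ absz (Rb x)
                         = Kc (vneg Rb) * \prod_(x in Fset Rb) Nb x ^+ absz (Rb x)) ->
  v \in Ra -> vneg v \in Ra ->
  ln (K (vneg v) / K v) = - \sum_i (v i)%:~R * ln (Nb (inl i)).
Proof.
move=> Nb_gt0 balance v_in vneg_in.
have [lift_in ->] := admissible_completion_rate v_in.
have [neg_lift_in ->] := admissible_completion_rate vneg_in.
have [[_ Kc_gt0] _] := completion.
rewrite inl_vec_vneg -(sum_inl_vec v (fun x => ln (Nb x))) in neg_lift_in *.
by apply: ln_rate_ratio_balanced; [apply: Kc_gt0 | apply: Kc_gt0 | | apply: balance].
Qed.

End AdmissibleCompletion.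

Lemma cycle_pairing_potential_eq0 (R : realType) (S : finType) (Rs : seq (vec S))
    (y : S -> R) (c a : 'I_(size Rs) -> R) :
  is_cycle c ->
  (forall j, c j != 0 -> a j = - \sum_i ((nth [ffun => 0] Rs j) i)%:~R * y i) ->
  \sum_j a j * c j = 0.
Proof.
move=> cycle_c potential.
rewrite (eq_bigr (fun j => - \sum_i c j * ((nth [ffun => 0] Rs j) i)%:~R * y i)).
  by rewrite sumrN exchange_big big1 ?oppr0 // => i _; rewrite -mulr_suml cycle_c mul0r.
move=> j _; have [->|/potential ->] := eqVneq (c j) 0.
  by rewrite mulr0 big1 ?oppr0 // => i _; rewrite !mul0r.
by rewrite mulNr mulr_suml; congr (- _); apply: eq_bigr => i _; rewrite mulrC mulrA.
Qed.

Theorem proposition6p8 (R : realType) (N : nat)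
  (Rset : {fset vec 'I_N}) (K : vec 'I_N -> R)
  (Rs : seq (vec 'I_N)) (Ra : {fset vec 'I_N}) :
  kinetic Rset K -> bidirectional Rset -> is_Rs Rset Rs ->
  Ra `<=` Rset ->
  (exists c : 'I_(size Rs) -> R,
     @is_cycle R _ Rs c /\
     \sum_(j < size Rs)
        ln (K (vneg (nth [ffun => 0] Rs j)) / K (nth [ffun => 0] Rs j)) * c j != 0 /\
     (forall j : 'I_(size Rs), c j != 0 ->
        nth [ffun => 0] Rs j \in Ra /\ vneg (nth [ffun => 0] Rs j) \in Ra)) ->
  ~ admits_admissible_closed_completion Rset K Ra.
Proof.
move=> _ _ _ Ra_sub [c [cycle_c [affinity_neq0 support_c]]].
move=> [M [Rc [Kc [completion [adm [[_ [Nb [Nb_gt0 balance]]] _]]]]]].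
apply: (negP affinity_neq0); apply/eqP.
apply: (cycle_pairing_potential_eq0 (y := fun i => ln (Nb (inl i))) cycle_c).
move=> j /support_c [Rj_in negRj_in].
by rewrite (ln_rate_ratio_admissible completion adm Ra_sub Nb_gt0 balance Rj_in negRj_in).
Qed.
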